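(* Let $K$ be a finite field of characteristic $p$ and order $q$, let $s$ be a positive integer with $\gcd(s,q-1)=1$, and let $\tau$ be the permutation of $\mathcal{W}_{K,s}$ defined below, of order $m$. Let $A_0,\dots,A_{k-1}$ be distinct elements of $\mathcal{W}_{K,s}$ with $\tau(A_i)=A_{i+1}$ for all $i\in\mathbb{Z}/k\mathbb{Z}$. Then $k\mid m$, and $N_{A_0}=N_{A_1}=\cdots=N_{A_{k-1}}$, and this common value is a multiple of $m/k$.
   Context: $\zeta=\exp(2\pi i/p)$, $\psi(x)=\zeta^{\mathrm{Tr}(x)}$ with $\mathrm{Tr}$ the absolute trace of $K$ to $\mathbb{F}_p$; $W_u=\sum_{x\in K}\psi(x^s-ux)$ for $u\in K$; $\mathcal{W}_{K,s}=\{W_u:u\in K^\times\}$; for $A\in\mathbb{Z}[\zeta]$, $N_A=|\{u\in K^\times: W_u=A\}|$. Let $\gamma$ be a primitive element of $\mathbb{F}_p$ and $\sigma\in\mathrm{Gal}(\mathbb{Q}(\zeta)/\mathbb{Q})$ with $\sigma(\zeta)=\zeta^\gamma$; it is known that $\sigma(W_u)=W_{\gamma^{1-1/s}u}$ for all $u$ (with $1/s$ the inverse of $s$ mod $p-1$), so $\sigma$ restricts to a permutation $\tau$ of $\mathcal{W}_{K,s}$. *)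

From HB Require Import structures.
From mathcomp Require Import all_boot all_order all_algebra all_field.
Set Implicit Arguments. Unset Strict Implicit. Unset Printing Implicit Defensive.
Import Order.TTheory GRing.Theory Num.Theory.
Local Open Scope ring_scope.

(* zeta = exp(2 pi i / p) in the algebraic complex numbers algC:
   p.-root (-1) is the p-th root of -1 with minimal nonnegative argument,
   i.e. exp(i pi / p); its square is exp(2 i pi / p). *)
Definition zeta (p : nat) : algC := (p.-root (-1)) ^+ 2.

Section WeilSums.
Variables (K : finFieldType) (p s : nat).

Definition abs_trace (x : K) : K :=
  \sum_(i < logn p #|K|) x ^+ (p ^ i).

Definition trace_nat (x : K) : nat :=
  odflt 0%N (omap (@nat_of_ord p) [pick i : 'I_p | (i%:R : K) == abs_trace x]).

Definition psi (x : K) : algC := zeta p ^+ trace_nat x.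

Definition W (u : K) : algC := \sum_(x : K) psi (x ^+ s - u * x).

Definition inW (A : algC) : Prop := exists2 u : K, u != 0 & W u = A.

Definition NA (A : algC) : nat := #|[set u : K | (u != 0) && (W u == A)]|.

End WeilSums.

From HB Require Import structures.
From mathcomp Require Import all_boot all_order all_algebra all_field.
From mathcomp Require Import ring.
Import Order.TTheory GRing.Theory Num.Theory.
Local Open Scope ring_scope.
Set Implicit Arguments. Unset Strict Implicit.

(* As the trace is F_p-linear, sigma (psi y) = psi (gamma y); substituting
   x -> h x with h^s = 1/gamma in the Weil sum gives sigma (W_u) = W_(c u) for
   c = gamma h.  Thus the fibre {u | W_u = sigma^j B} is c^j times the fibre
   of B: the N_(A_i) agree, k | m since sigma^m fixes A_0, and the
   fibre of A_0 is stable under multiplication by g = c^k.  Every orbit of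
   x -> g x on K^x has length o = ord(g), so o divides N_(A_0), while
   sigma^(k o) fixes every W_u, so m divides k o. *)

Section PrimeCharacteristic.

Variables (R : nzRingType) (p : nat).
Hypothesis pcharRp : p \in [pchar R].

Lemma natr_eq_pchar i j : (i%:R == j%:R :> R) = (i == j %[mod p]).
Proof.
wlog le_ji : i j / (j <= i)%N.
  by move=> H; case: (leqP j i) => [/H //|/ltnW/H]; rewrite eq_sym => ->.
by rewrite eqn_mod_dvd // (dvdn_pcharf pcharRp) natrB // subr_eq0.
Qed.

Lemma natr_coprime_inv a : coprime a p -> exists b, (a * b)%:R = 1 :> R.
Proof.
have p_gt1 := prime_gt1 (pcharf_prime pcharRp).
move=> co_ap; have a_gt0 : (0 < a)%N.
  by case: a co_ap => //; rewrite /coprime gcd0n => /eqP p1; rewrite p1 in p_gt1.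
have [u v Euv _] := egcdnP p a_gt0.
exists u; rewrite mulnC Euv (eqP co_ap).
by rewrite natrD natrM (pcharf0 pcharRp) mulr0 add0r.
Qed.

End PrimeCharacteristic.

Lemma prim_root_Fp_coprime p g :
  prime p -> (p.-1).-primitive_root (g%:R : 'F_p) -> coprime g p.
Proof.
move=> p_pr g_prim.
rewrite coprime_sym prime_coprime // (dvdn_pcharf (pchar_Fp p_pr)).
by rewrite (prim_root_eq0 g_prim) -subn1 subn_eq0 leqNgt prime_gt1.
Qed.

Lemma zeta_expp p : (0 < p)%N -> zeta p ^+ p = 1.
Proof. by move=> p_gt0; rewrite /zeta exprAC rootCK // sqrrN expr1n. Qed.

Section AdditiveCharacter.

Variables (K : finFieldType) (p : nat).
Hypothesis pcharKp : p \in [pchar K].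

Let p_gt0 : (0 < p)%N. Proof. exact/prime_gt0/(pcharf_prime pcharKp). Qed.

Lemma abs_traceMn a (y : K) : abs_trace p (a%:R * y) = a%:R * abs_trace p y.
Proof.
have frob_a i : (a%:R : K) ^+ (p ^ i) = a%:R.
  elim: i => [|i IHi]; first by rewrite expn0 expr1.
  by rewrite expnSr exprM IHi -(pFrobenius_autE pcharKp) rmorph_nat.
by rewrite /abs_trace mulr_sumr; apply: eq_bigr => i _; rewrite exprMn frob_a.
Qed.

Lemma psi_trace_natr (y : K) n : abs_trace p y = n%:R -> psi p y = zeta p ^+ n.
Proof.
move=> tr_y; rewrite /psi /trace_nat; case: pickP => [i /eqP tr_i | no_i] /=.
  rewrite -(expr_mod _ (zeta_expp p_gt0)) -[RHS](expr_mod _ (zeta_expp p_gt0)).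
  by apply/congr1/eqP; rewrite -(natr_eq_pchar pcharKp) tr_i tr_y.
have := no_i (Ordinal (ltn_pmod n p_gt0)).
by rewrite /= (GRing.natr_mod_pchar pcharKp) tr_y eqxx.
Qed.

(* The trace in fact always lies in the prime field; covering this case spares
   proving it. *)
Lemma psi_trace_not_natr (y : K) :
  ~~ [exists i : 'I_p, abs_trace p y == i%:R] -> psi p y = 1.
Proof.
move=> /existsPn tr_out; rewrite /psi /trace_nat.
case: pickP => [i /eqP tr_i | _] /=; last by rewrite expr0.
by have := tr_out i; rewrite -tr_i eqxx.
Qed.

Lemma psiMn a (y : K) : coprime a p -> psi p (a%:R * y) = psi p y ^+ a.
Proof.
move=> co_ap.
case: (boolP [exists i : 'I_p, abs_trace p y == i%:R]).
  case/existsP=> i /eqP tr_i.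
  have tr_ay : abs_trace p (a%:R * y) = (i * a)%:R.
    by rewrite abs_traceMn tr_i natrM mulrC.
  by rewrite (psi_trace_natr tr_i) (psi_trace_natr tr_ay) exprM.
move=> tr_out; rewrite (psi_trace_not_natr tr_out) expr1n psi_trace_not_natr //.
apply: contra tr_out => /existsP[i /eqP tr_ai].
have [b ab1] := natr_coprime_inv pcharKp co_ap.
apply/existsP; exists (Ordinal (ltn_pmod (b * i) p_gt0)).
rewrite /= (GRing.natr_mod_pchar pcharKp) natrM -tr_ai abs_traceMn mulrA -natrM.
by rewrite mulnC ab1 mul1r.
Qed.

Lemma sigma_psi (sigma : {rmorphism algC -> algC}) gamma (y : K) :
  sigma (zeta p) = zeta p ^+ gamma -> coprime gamma p ->
  sigma (psi p y) = psi p (gamma%:R * y).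
Proof.
by move=> sigma_zeta co_gp; rewrite psiMn // /psi rmorphXn sigma_zeta exprAC.
Qed.

End AdditiveCharacter.

Section FiniteField.

Variable K : finFieldType.

Lemma expf_card_sub1 (z : K) : z != 0 -> z ^+ (#|K| - 1) = 1.
Proof.
move=> z_nz; apply: (mulfI z_nz); rewrite mulr1 -exprS subn1.
by rewrite prednK ?expf_card // (ltn_trans _ (finNzRing_gt1 K)).
Qed.

Lemma coprime_exists_root s (z : K) :
  (0 < s)%N -> coprime s (#|K| - 1) -> z != 0 -> exists h, h ^+ s = z.
Proof.
move=> s_gt0 co_s z_nz; have [u v Euv _] := egcdnP (#|K| - 1) s_gt0.
exists (z ^+ u); rewrite -exprM Euv (eqP co_s) exprD mulnC exprM.
by rewrite expf_card_sub1 // expr1n mul1r.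
Qed.

Lemma order_mulr (g x : K) :
  g != 0 -> x != 0 -> order ( *%R g) x = order ( *%R g) 1%R.
Proof.
move=> g_nz; have le_order y z :
    y != 0 -> z != 0 -> (order ( *%R g) y <= order ( *%R g) z)%N.
  move=> y_nz z_nz; rewrite leqNgt; apply/negP => lt_zy.
  have gz1 : g ^+ order ( *%R g) z = 1.
    by apply: (mulIf z_nz); rewrite mul1r -iter_mulr iter_order //; apply: mulfI.
  have := findex_iter lt_zy; rewrite iter_mulr gz1 mul1r findex0 => oz0.
  by have := order_gt0 ( *%R g) z; rewrite -oz0.
by move=> x_nz; apply/eqP; rewrite eqn_leq !le_order ?oner_neq0.
Qed.

Lemma order_mulr_dvd_card (g : K) (S : {set K}) :
  g != 0 -> 0 \notin S -> fclosed ( *%R g) S -> (order ( *%R g) 1%R %| #|S|)%N.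
Proof.
move=> g_nz S_nz S_closed.
have S_order : S \subset order_set ( *%R g) (order ( *%R g) 1%R).
  apply/subsetP => x x_S; rewrite inE order_mulr //.
  by apply: contraNneq S_nz => <-.
by rewrite -(fcard_order_set (mulfI g_nz) S_order S_closed) dvdn_mull.
Qed.

End FiniteField.

Lemma dvdn_min_period (I T : Type) (D : I -> Prop) (w : I -> T) (f : T -> T)
    m n :
  (0 < m)%N -> (forall i, D i -> iter m f (w i) = w i) ->
  (forall m', (0 < m')%N ->
     (forall i, D i -> iter m' f (w i) = w i) -> (m <= m')%N) ->
  (forall i, D i -> iter n f (w i) = w i) -> (m %| n)%N.
Proof.
move=> m_gt0 per_m min_m per_n.
have per_qm q i : D i -> iter (q * m) f (w i) = w i.
  by move=> Di; elim: q => // q IHq; rewrite mulSn iterD IHq per_m.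
have per_r i : D i -> iter (n %% m) f (w i) = w i.
  by move=> Di; rewrite -{2}(per_n i Di) {2}(divn_eq n m) addnC iterD per_qm.
apply/dvdnP; exists (n %/ m)%N; rewrite {1}(divn_eq n m).
case: (posnP (n %% m)) => [-> | r_gt0]; first by rewrite addn0.
by have := min_m _ r_gt0 per_r; rewrite leqNgt ltn_pmod.
Qed.

Lemma sigma_W (K : finFieldType) p s gamma (sigma : {rmorphism algC -> algC}) :
  p \in [pchar K] -> (0 < s)%N -> coprime s (#|K| - 1) ->
  coprime gamma p -> sigma (zeta p) = zeta p ^+ gamma ->
  exists2 c : K, c != 0 & forall u, sigma (W p s u) = W p s (c * u).
Proof.
move=> pcharKp s_gt0 co_s co_gp sigma_zeta.
have [b gb1] := natr_coprime_inv pcharKp co_gp.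
set G : K := gamma%:R; have G_nz : G != 0.
  by apply: contra_eq_neq gb1 => G0; rewrite natrM -/G G0 mul0r eq_sym oner_neq0.
have [h hsG] := coprime_exists_root s_gt0 co_s (invr_neq0 G_nz).
have h_nz : h != 0.
  by apply: contra_eq_neq hsG => ->; rewrite expr0n gtn_eqF // eq_sym invr_eq0.
exists (G * h) => [|u]; first by rewrite mulf_neq0.
rewrite /W rmorph_sum (reindex_inj (mulfI h_nz)); apply: eq_bigr => x _.
rewrite (sigma_psi pcharKp _ sigma_zeta co_gp) -/G mulrBr exprMn hsG mulVKf //.
by congr (psi p (_ - _)); ring.
Qed.

Section WeilSumOrbits.

Variables (K : finFieldType) (p s : nat).
Variables (sigma : {rmorphism algC -> algC}) (c : K).
Hypotheses (c_nz : c != 0) (sigmaW : forall u, sigma (W p s u) = W p s (c * u)).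

Definition Wfiber (B : algC) : {set K} :=
  [set u : K | (u != 0) && (W p s u == B)].

Lemma iter_sigmaW j u : iter j sigma (W p s u) = W p s (c ^+ j * u).
Proof.
by elim: j u => [|j IHj] u; rewrite ?expr0 ?mul1r //= IHj sigmaW mulrA -exprS.
Qed.

Lemma Wfiber_iter j B : Wfiber (iter j sigma B) = ( *%R (c ^+ j)) @: Wfiber B.
Proof.
have cj_nz : c ^+ j != 0 by rewrite expf_neq0.
have iter_inj : injective (iter j sigma).
  by elim: j {cj_nz} => // j IHj x y /fmorph_inj/IHj.
apply/setP => v; rewrite -[v](mulVKf cj_nz) mem_imset; last exact: mulfI.
by rewrite !inE mulf_eq0 negb_or cj_nz -iter_sigmaW (inj_eq iter_inj).
Qed.

Lemma NA_iter j B : NA K p s (iter j sigma B) = NA K p s B.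
Proof.
change (#|Wfiber (iter j sigma B)| = #|Wfiber B|).
by rewrite Wfiber_iter card_imset //; apply/mulfI/expf_neq0.
Qed.

Lemma Wfiber_closed k B :
  iter k sigma B = B -> fclosed ( *%R (c ^+ k)) (Wfiber B).
Proof.
move=> fixB x _ /eqP <-; rewrite -[in RHS]fixB Wfiber_iter mem_imset //.
by apply: mulfI; rewrite expf_neq0.
Qed.

End WeilSumOrbits.

Theorem lemma2p3
  (K : finFieldType) (p : nat) (hp : prime p) (hchar : p \in [pchar K])
  (s : nat) (hs : (0 < s)%N) (hcop : coprime s (#|K| - 1))
  (gamma : nat) (hgamma : (p.-1).-primitive_root (gamma%:R : 'F_p))
  (sigma : {rmorphism algC -> algC})
  (hsigma : sigma (zeta p) = zeta p ^+ gamma)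
  (m : nat) (hm0 : (0 < m)%N)
  (hm : forall u : K, u != 0 -> iter m sigma (W p s u) = W p s u)
  (hmmin : forall m' : nat, (0 < m')%N ->
      (forall u : K, u != 0 -> iter m' sigma (W p s u) = W p s u) -> (m <= m')%N)
  (k : nat) (hk : (0 < k)%N) (A : nat -> algC)
  (hAW : forall i, (i < k)%N -> @inW K p s (A i))
  (hAinj : forall i j, (i < k)%N -> (j < k)%N -> A i = A j -> i = j)
  (hAcyc : forall i, (i < k)%N -> sigma (A i) = A ((i + 1) %% k)%N) :
  (k %| m)%N /\
  (forall i, (i < k)%N -> @NA K p s (A i) = @NA K p s (A 0%N)) /\
  (m %/ k %| @NA K p s (A 0%N))%N.
Proof.
have [c c_nz sigmaW] :=
  sigma_W hchar hs hcop (prim_root_Fp_coprime hp hgamma) hsigma.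
have orbitA j : iter j sigma (A 0%N) = A (j %% k)%N.
  elim: j => [|j IHj]; first by rewrite mod0n.
  by rewrite iterS IHj hAcyc ?ltn_pmod // modnDml addn1.
have k_dvd_m : (k %| m)%N.
  have [u0 u0_nz Wu0] := hAW 0%N hk.
  by apply/eqP/hAinj; rewrite ?ltn_pmod // -orbitA -Wu0 hm.
split=> //; split=> [i lt_ik | ].
  by rewrite -(modn_small lt_ik) -orbitA (NA_iter c_nz sigmaW).
set g := c ^+ k; set o := order ( *%R g) 1%R.
have g_o : g ^+ o = 1.
  by rewrite -iter_mulr_1 iter_order //; apply/mulfI/expf_neq0.
have m_dvd_ko : (m %| k * o)%N.
  apply: (dvdn_min_period hm0 hm hmmin) => u _.
  by rewrite (iter_sigmaW sigmaW) exprM g_o mul1r.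
rewrite (dvdn_divLR _ hk k_dvd_m) mulnC (dvdn_trans m_dvd_ko) // dvdn_pmul2l //.
apply: order_mulr_dvd_card; first by rewrite expf_neq0.
  by rewrite inE eqxx.
by apply: (Wfiber_closed c_nz sigmaW); rewrite orbitA modnn.
Qed.
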